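(* Let $\Bbbk$ be a unital ring, $n,r$ positive integers, $\varepsilon\in\{0,1/2\}$, $d=n-2\varepsilon$, and assume $d>r+1$. Then the kernel of $\Phi_{n,r+\varepsilon}:\Bbbk W_d\to\operatorname{End}_\Bbbk(\mathbf V^{\otimes r})$ contains the cell ideal $$\Bbbk\{y_{\mathfrak s\mathfrak t}\mid \mathfrak s,\mathfrak t\text{ standard},\ [\mathfrak s]=[\mathfrak t]\not\trianglelefteq(r+1,1^{d-r-1})\}$$ of $\Bbbk W_d$.
   Context: $\mathbf V$ is a free $\Bbbk$-module of rank $n$ with basis $\mathbf v_1,\dots,\mathbf v_n$. $W_n$ is the symmetric group on $\{1,\dots,n\}$, acting on $\mathbf V^{\otimes r}$ by $w(\mathbf v_{j_1}\otimes\cdots\otimes\mathbf v_{j_r})=\mathbf v_{w(j_1)}\otimes\cdots\otimes\mathbf v_{w(j_r)}$, giving $\Phi_{n,r}:\Bbbk W_n\to\operatorname{End}_\Bbbk(\mathbf V^{\otimes r})$. $W_{n-1}=\{w\in W_n:w(n)=n\}$ preserves $\mathbf V^{\otimes r}\otimes\mathbf v_n\subset\mathbf V^{\otimes(r+1)}$, identified with $\mathbf V^{\otimes r}$, giving $\Phi_{n,r+1/2}:\Bbbk W_{n-1}\to\operatorname{End}_\Bbbk(\mathbf V^{\otimes r})$. For a partition $\lambda$ of $d$: a $\lambda$-tableau is a bijective filling of the Young diagram by $1,\dots,d$; row-standard means rows increase, standard means rows and columns increase. $\mathfrak t^\lambda$ is the row-reading tableau, $W_\lambda$ its row stabiliser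 in $W_d$, $d(\mathfrak t)\in W_d$ the permutation with $\mathfrak t=d(\mathfrak t)\mathfrak t^\lambda$, $y_\lambda=\sum_{w\in W_\lambda}\operatorname{sgn}(w)w$, $y_{\mathfrak s\mathfrak t}=d(\mathfrak s)^{-1}y_\lambda d(\mathfrak t)$, and $[\mathfrak t]$ is the shape of $\mathfrak t$. $\trianglelefteq$ is the dominance order. The standard $y_{\mathfrak s\mathfrak t}$ form Murphy's cellular basis of $\Bbbk W_d$, and spans over upward-closed sets of shapes are cell ideals. *)

From mathcomp Require Import all_boot all_order all_algebra all_fingroup.
Set Implicit Arguments. Unset Strict Implicit. Unset Printing Implicit Defensive.
Import GRing.Theory.
Local Open Scope ring_scope.

(* Conventions.  Indices are 0-based: the basis v_1..v_n of V is indexed by  *)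
(* 'I_n, the letters 1..d permuted by W_d by 'I_d, and the r tensor slots by *)
(* 'I_r.  W_d is {perm 'I_d}; w acts on 'I_n (d <= n) by w on the first d     *)
(* indices and trivially on the others (for d = n-1 this is the embedding    *)
(* W_{n-1} = {w in W_n | w(n) = n}).                                          *)

(* Composition of permutations as functions: (compp a b) x = a (b x). *)
Definition compp (d : nat) (a b : {perm 'I_d}) : {perm 'I_d} := (b * a)%g.

(* The group algebra k W_d: elements are coefficient functions. *)
Definition galg (R : pzRingType) (d : nat) := {ffun {perm 'I_d} -> R}.

Definition gdelta (R : pzRingType) (d : nat) (w : {perm 'I_d}) : galg R d :=
  [ffun g => if g == w then 1 else 0].

(* multiplication of k W_d (convolution, w.r.t. function composition) *)
Definition gmul (R : pzRingType) (d : nat) (x y : galg R d) : galg R d :=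
  [ffun g => \sum_(a : {perm 'I_d}) \sum_(b : {perm 'I_d} | compp a b == g)
               x a * y b].

Definition gscale (R : pzRingType) (d : nat) (c : R) (x : galg R d) : galg R d :=
  [ffun g => c * x g].

Definition pext (n d : nat) (w : {perm 'I_d}) (i : 'I_n) : 'I_n :=
  match (insub (nat_of_ord i) : option 'I_d) with
  | Some j => odflt i (insub (nat_of_ord (w j)))
  | None => i
  end.

(* V^{(x) r}: coordinates w.r.t. the basis v_{j_1} (x) ... (x) v_{j_r},      *)
(* indexed by J : 'I_r -> 'I_n.                                              *)
Definition tens (R : pzRingType) (n r : nat) := {ffun {ffun 'I_r -> 'I_n} -> R}.

(* Phi_{n,r}-type action of x in k W_d on V^{(x) r}:                         *)
(*   w (v_{j_1} (x) ... (x) v_{j_r}) = v_{w j_1} (x) ... (x) v_{w j_r}.       *)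
Definition Phi (R : pzRingType) (n r d : nat) (x : galg R d) (f : tens R n r)
  : tens R n r :=
  [ffun K : {ffun 'I_r -> 'I_n} =>
     \sum_(w : {perm 'I_d}) \sum_(J : {ffun 'I_r -> 'I_n} |
                                   [ffun i => @pext n d w (J i)] == K)
        x w * f J].

(* Phi_{n, r + eps} with eps = false meaning 0 and eps = true meaning 1/2:    *)
(* it is defined on k W_{n - 2 eps}.  For eps = 1/2 the space V^{(x) r} (x) v_n *)
(* is identified with V^{(x) r}; W_{n-1} fixes v_n, so it acts on the first r *)
(* factors as above.                                                         *)
Definition Phi_eps (R : pzRingType) (n r : nat) (eps : bool) :
  galg R (n - eps) -> tens R n r -> tens R n r := @Phi R n r (n - eps).

Definition is_partition (d : nat) (la : seq nat) : bool :=
  [&& sorted geq la, all (fun a => 0 < a)%N la & sumn la == d].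

(* box (i,j) (row i, column j, 0-based) of the Young diagram *)
Definition in_diagram (la : seq nat) (b : nat * nat) : bool :=
  (b.1 < size la)%N && (b.2 < nth 0 la b.1)%N.

Definition dom_le (la mu : seq nat) : bool :=
  [forall k : 'I_(size la + size mu).+1,
     (sumn (take k la) <= sumn (take k mu))%N].

Definition hook (d r : nat) : seq nat := r.+1 :: nseq (d - r.+1) 1%N.

(* A tableau with entries 1..d (encoded as 'I_d) is given by the position    *)
(* (row, column) of each entry.  It is a la-tableau when this is a bijection *)
(* onto the Young diagram of la (injective into the diagram, which has       *)
(* exactly d boxes when la is a partition of d).                             *)
Definition tableau (d : nat) := {ffun 'I_d -> nat * nat}.

Definition is_tableau (d : nat) (la : seq nat) (t : tableau d) : bool :=
  injectiveb t && [forall k, in_diagram la (t k)].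

Definition row_standard (d : nat) (t : tableau d) : bool :=
  [forall k, forall l,
     ((t k).1 == (t l).1) && ((t k).2 < (t l).2)%N ==> (k < l)%N].

Definition standard (d : nat) (t : tableau d) : bool :=
  row_standard t &&
  [forall k, forall l,
     ((t k).2 == (t l).2) && ((t k).1 < (t l).1)%N ==> (k < l)%N].

(* position of entry k in the row-reading tableau t^la *)
Fixpoint rr_pos (la : seq nat) (k : nat) : nat * nat :=
  match la with
  | [::] => (0%N, k)
  | a :: la' => if (k < a)%N then (0%N, k)
                else let p := rr_pos la' (k - a) in (p.1.+1, p.2)
  end.

Definition tlam (d : nat) (la : seq nat) : tableau d := [ffun k : 'I_d => rr_pos la k].

(* d(t): the permutation with t = d(t) t^la, i.e. the entry of t in the box   *)
(* containing k in t^la is d(t)(k).                                          *)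
Definition dperm (d : nat) (la : seq nat) (t : tableau d) : {perm 'I_d} :=
  odflt 1%g [pick g : {perm 'I_d} | [forall k, t (g k) == tlam d la k]].

Definition rowstab (d : nat) (la : seq nat) : {set {perm 'I_d}} :=
  [set w : {perm 'I_d} | [forall k, (tlam d la (w k)).1 == (tlam d la k).1]].

Definition sgn (R : pzRingType) (d : nat) (w : {perm 'I_d}) : R :=
  (-1) ^+ odd_perm w.

Definition y_la (R : pzRingType) (d : nat) (la : seq nat) : galg R d :=
  \sum_(w in rowstab d la) gscale (sgn R w) (gdelta R w).

Definition y_st (R : pzRingType) (d : nat) (la : seq nat) (s t : tableau d)
  : galg R d :=
  gmul (gmul (gdelta R (dperm la s)^-1) (y_la R d la)) (gdelta R (dperm la t)).

Definition in_cell_span (R : pzRingType) (d r : nat) (x : galg R d) : Prop :=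
  exists l : seq (R * (seq nat * (tableau d * tableau d))),
    (forall e, e \in l ->
       [/\ is_partition d e.2.1, ~~ dom_le e.2.1 (hook d r),
           is_tableau e.2.1 e.2.2.1 && standard e.2.2.1
         & is_tableau e.2.1 e.2.2.2 && standard e.2.2.2]) /\
    x = \sum_(e <- l) gscale e.1 (y_st R e.2.1 e.2.2.1 e.2.2.2).

From mathcomp Require Import all_boot all_order all_algebra all_fingroup zify.
Set Implicit Arguments. Unset Strict Implicit. Unset Printing Implicit Defensive.
Import GRing.Theory.
Local Open Scope ring_scope.

(* Phi is multiplicative, so Phi(y_st) = Phi(d(s)^-1) Phi(y_la) Phi(d(t)) and
   it suffices that Phi(y_la) = 0.  A partition la of d that is not dominated by
   the hook (r+1, 1^(d-r-1)) has fewer than d - r rows.  Given a basis tensor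
   v_K, at least d - r letters do not occur in K, so two of them, a and b, lie
   in the same row of t^la.  The transposition (a b) is odd, lies in W_la and
   fixes v_K, so the terms of Phi(y_la) v_K cancel in pairs. *)

Lemma gmulE (R : pzRingType) d (x y : galg R d) g :
  gmul x y g = \sum_a x a * y (g * a^-1)%g.
Proof.
rewrite ffunE; apply: eq_bigr => a _.
rewrite (big_pred1 (g * a^-1)%g) // => b /=.
by rewrite /compp; apply/eqP/eqP => [<-|->]; rewrite ?mulgK ?mulgKV.
Qed.

Lemma pigeonhole_nat (T : finType) (A : {set T}) (h : T -> nat) m :
  {in A, forall a, h a < m}%N -> (m < #|A|)%N ->
  exists2 a, a \in A & exists2 b, b \in [predD1 A & a] & h a = h b.
Proof.
move=> hm mA; apply/dinjectivePn; apply: contraTN mA => inj_h.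
rewrite -leqNgt cardE -(size_map h) -(size_iota 0 m) uniq_leq_size //.
by move=> _ /mapP[a + ->]; rewrite mem_enum mem_iota => /hm.
Qed.

Lemma sum_sgn_odd_invariant_eq0 (R : pzRingType) d (S : {set {perm 'I_d}})
    (t : {perm 'I_d}) (G : {perm 'I_d} -> R) :
  odd_perm t -> (forall w, ((w * t)%g \in S) = (w \in S)) ->
  (forall w, G (w * t)%g = G w) ->
  \sum_(w in S) sgn R w * G w = 0.
Proof.
move=> odd_t St Gt.
rewrite (bigID (fun w => odd_perm w)) /= (reindex_inj (mulIg t)) /=.
rewrite (eq_bigl (fun w => (w \in S) && ~~ odd_perm w)); last first.
  by move=> w; rewrite St odd_permM odd_t addbT.
rewrite -big_split /=; apply: big1 => w /andP[_ even_w].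
by rewrite Gt /sgn odd_permM odd_t addbT (negbTE even_w) expr1 expr0 mulN1r mul1r addNr.
Qed.

Lemma y_laE (R : pzRingType) d la w :
  y_la R d la w = if w \in rowstab d la then sgn R w else 0.
Proof.
rewrite /y_la sum_ffunE; case: ifP => wS.
  rewrite (bigD1 w) //= !ffunE eqxx mulr1 big1 ?addr0 // => v /andP[_ vw].
  by rewrite !ffunE eq_sym (negbTE vw) mulr0.
apply: big1 => v vS; rewrite !ffunE; case: eqP => [wv|_]; last by rewrite mulr0.
by rewrite wv vS in wS.
Qed.

Lemma rr_pos_row la k : (k < sumn la)%N -> ((rr_pos la k).1 < size la)%N.
Proof.
by elim: la k => [|a la IH] k //= kl; case: ifP => // ka /=; rewrite ltnS IH //; lia.
Qed.

Lemma size_le_sumn s : all (fun a => 0 < a)%N s -> (size s <= sumn s)%N.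
Proof. by elim: s => //= a s IH /andP[a0 /IH]; lia. Qed.

Lemma not_dom_hook_size d r la : is_partition d la ->
  ~~ dom_le la (hook d r) -> (size la + r < d)%N.
Proof.
move=> /and3P[_ la_pos /eqP sum_la] nd; rewrite ltnNge; apply: contraNN nd => la_long.
apply/forallP => -[[|k] _] /=; first by rewrite take0.
have split_sum : (sumn (take k.+1 la) + sumn (drop k.+1 la) = d)%N.
  by rewrite -sumn_cat cat_take_drop.
have tail_long : (size la - k.+1 <= sumn (drop k.+1 la))%N.
  by rewrite -size_drop size_le_sumn //; apply/allP => a /mem_drop/(allP la_pos).
rewrite /hook /=; case: (leqP k (d - r.+1)) => kd.
  by rewrite take_nseq // sumn_nseq; lia.
by rewrite (@take_oversize _ _ (nseq _ _)) ?size_nseq ?sumn_nseq; lia.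
Qed.

Section LetterAction.

Variables (n d : nat) (dn : (d <= n)%N).
Implicit Types (w : {perm 'I_d}) (a : 'I_d) (i : 'I_n).

Lemma pext_widen w a : pext w (widen_ord dn a) = widen_ord dn (w a).
Proof.
rewrite /pext /= valK /=.
case: insubP => [j _ jw|]; first exact: val_inj.
by rewrite /= (leq_trans (ltn_ord _) dn).
Qed.

Lemma pext_out w i : (d <= i)%N -> pext w i = i.
Proof. by move=> di; rewrite /pext insubF // ltnNge di. Qed.

Lemma pext_id w i : (forall a, widen_ord dn a = i -> w a = a) -> pext w i = i.
Proof.
case: (ltnP i d) => [id|di] wi; last exact: pext_out.
have ia : widen_ord dn (Ordinal id) = i by apply: val_inj.
by rewrite -ia pext_widen (wi _ ia).
Qed.

Lemma pextM (s t : {perm 'I_d}) i : pext (s * t)%g i = pext t (pext s i).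
Proof.
case: (ltnP i d) => [id|di]; last by rewrite !pext_out.
have <- : widen_ord dn (Ordinal id) = i by apply: val_inj.
by rewrite !pext_widen permM.
Qed.

Lemma pext1 i : pext (1%g : {perm 'I_d}) i = i.
Proof. by apply: pext_id => a _; rewrite perm1. Qed.

Variable r : nat.
Implicit Types (K : {ffun 'I_r -> 'I_n}).

Definition tact w K : {ffun 'I_r -> 'I_n} := [ffun j => pext w (K j)].

Lemma tactM (s t : {perm 'I_d}) K : tact (s * t)%g K = tact t (tact s K).
Proof. by apply/ffunP => j; rewrite !ffunE pextM. Qed.

Lemma tact1 K : tact 1%g K = K.
Proof. by apply/ffunP => j; rewrite ffunE pext1. Qed.

Lemma card_letters_in K : (#|[set a | widen_ord dn a \in codom K]| <= r)%N.
Proof.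
have widen_inj : injective (widen_ord dn) by move=> a b [/val_inj].
rewrite -(card_imset _ widen_inj).
apply: (@leq_trans #|codom K|).
  by apply/subset_leq_card/subsetP => _ /imsetP[a + ->]; rewrite inE.
by rewrite (leq_trans (card_size _)) // size_codom card_ord.
Qed.

Lemma tact_tperm_out a b K :
  widen_ord dn a \notin codom K -> widen_ord dn b \notin codom K ->
  tact (tperm a b) K = K.
Proof.
move=> aK bK; apply/ffunP => j; rewrite ffunE; apply: pext_id => c cj.
by apply: tpermD; [move: aK | move: bK]; apply: contraNneq => ->; rewrite cj codom_f.
Qed.

Variable R : pzRingType.
Implicit Types (x y : galg R d) (f : tens R n r).

Lemma PhiE x f K : Phi x f K = \sum_w x w * f (tact w^-1 K).
Proof.
rewrite ffunE; apply: eq_bigr => w _.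
rewrite (big_pred1 (tact w^-1 K)) // => J /=.
rewrite -[[ffun j => _]]/(tact w J).
by apply/eqP/eqP => [<-|->]; rewrite -tactM ?mulgV ?mulVg tact1.
Qed.

Lemma Phi_gmul x y f : Phi (gmul x y) f = Phi x (Phi y f).
Proof.
apply/ffunP => K; rewrite !PhiE.
under eq_bigr => g _ do rewrite gmulE mulr_suml.
rewrite exchange_big /=; apply: eq_bigr => a _.
rewrite PhiE mulr_sumr (reindex_inj (mulIg a)) /=.
by apply: eq_bigr => b _; rewrite mulgK mulrA invMg tactM.
Qed.

Lemma Phi0 x : Phi x (0 : tens R n r) = 0.
Proof.
by apply/ffunP => K; rewrite PhiE ffunE big1 // => w _; rewrite ffunE mulr0.
Qed.

Lemma Phi_sum_gscale (I : Type) (l : seq I) (c : I -> R) (y : I -> galg R d) f K :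
  Phi (\sum_(e <- l) gscale (c e) (y e)) f K = \sum_(e <- l) c e * Phi (y e) f K.
Proof.
rewrite PhiE; under eq_bigr => w _ do rewrite sum_ffunE mulr_suml.
rewrite exchange_big /=; apply: eq_bigr => e _.
by rewrite PhiE mulr_sumr; apply: eq_bigr => w _; rewrite ffunE mulrA.
Qed.

Lemma Phi_y_la_eq0 la f : sumn la = d -> (size la + r < d)%N ->
  Phi (y_la R d la) f = 0.
Proof.
move=> sum_la short_la; apply/ffunP => K; rewrite PhiE ffunE.
pose row a := (tlam d la a).1.
pose V := [set a | widen_ord dn a \in codom K].
have row_lt : {in ~: V, forall a, row a < size la}%N.
  by move=> a _; rewrite /row ffunE rr_pos_row // sum_la.
have many_free : (size la < #|~: V|)%N.
  have V_small : (#|V| <= r)%N := card_letters_in K.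
  have := cardsC V; rewrite card_ord; lia.
have [a aV [b /andP[ba bV] row_ab]] := pigeonhole_nat row_lt many_free.
have tK : tact (tperm a b)^-1 K = K.
  by rewrite tpermV; apply: tact_tperm_out; [move: aV | move: bV]; rewrite !inE.
have row_t c : row (tperm a b c) = row c by case: tpermP => // ->.
pose G w := f (tact w^-1 K).
rewrite (eq_bigr (fun w => if w \in rowstab d la then sgn R w * G w else 0));
  last by move=> w _; rewrite y_laE; case: ifP; rewrite ?mul0r.
rewrite -big_mkcond; apply: (sum_sgn_odd_invariant_eq0 (t := tperm a b)).
- by rewrite odd_tperm eq_sym.
- move=> w; rewrite !inE; apply: eq_forallb => k.
  by rewrite permM; move: (row_t (w k)); rewrite /row => ->.
- by move=> w; rewrite /G invMg tactM tK.
Qed.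

Lemma Phi_y_st_eq0 la (s t : tableau d) f : sumn la = d -> (size la + r < d)%N ->
  Phi (y_st R la s t) f = 0.
Proof. by move=> *; rewrite /y_st !Phi_gmul Phi_y_la_eq0 // Phi0. Qed.

End LetterAction.

Theorem proposition7p1 (R : pzRingType) (n r : nat) (eps : bool) :
  (0 < n)%N -> (0 < r)%N -> (r.+1 < n - eps)%N ->
  forall x : galg R (n - eps), @in_cell_span R (n - eps) r x ->
  forall f : tens R n r, @Phi_eps R n r eps x f = 0.
Proof.
move=> _ _ _ x [l [cells ->]] f; apply/ffunP => K.
rewrite /Phi_eps Phi_sum_gscale ?leq_subr // ffunE big1_seq // => e /andP[_ el].
have [la_part nd _ _] := cells e el.
have short_la := not_dom_hook_size la_part nd.
case/and3P: la_part => _ _ /eqP sum_la.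
by rewrite (Phi_y_st_eq0 (leq_subr eps n)) // ffunE mulr0.
Qed.
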